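(* Let $a\in\C\setminus\{0\}$ and let $t_i=\sum_{n\ge0}t_{i,n}q^n\in\C[[q]]$, $i=1,2,3$, be formal power series satisfying $$\dot t_1=t_1^2-\tfrac1{12}t_2,\qquad \dot t_2=4t_1t_2-6t_3,\qquad \dot t_3=6t_1t_3-\tfrac13t_2^2,\qquad\text{where }\dot{}=a\,q\frac{\partial}{\partial q},$$ and assume $(t_{1,1},t_{2,1},t_{3,1})\neq(0,0,0)$. Put $b=a/12$. Then $(t_{1,0},t_{2,0},t_{3,0})=(b,12b^2,8b^3)$ and there is $c\in\C\setminus\{0\}$ such that $$t_1=b\,E_2(cq),\qquad t_2=12b^2\,E_4(cq),\qquad t_3=8b^3\,E_6(cq),$$ where $E_{2k}(q)=1+\beta_k\sum_{n\ge1}\big(\sum_{d\mid n}d^{2k-1}\big)q^n$ with $(\beta_1,\beta_2,\beta_3)=(-24,240,-504)$. *)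

(* Formal power series over a field R are represented by
   their coefficient sequences  nat -> R. *)
From HB Require Import structures.
From mathcomp Require Import all_boot all_order all_algebra.
Set Implicit Arguments. Unset Strict Implicit. Unset Printing Implicit Defensive.
Import Order.TTheory GRing.Theory Num.Theory.
Local Open Scope ring_scope.

Definition psmul (R : nzRingType) (f g : nat -> R) : nat -> R :=
  fun n => \sum_(i < n.+1) f i * g (n - i)%N.

(* The derivation  a q d/dq  on coefficient sequences: n-th coeff a * n * f_n *)
Definition psder (R : nzRingType) (a : R) (f : nat -> R) : nat -> R :=
  fun n => a * n%:R * f n.

(* f(c q): n-th coefficient c^n f_n *)
Definition psresc (R : nzRingType) (c : R) (f : nat -> R) : nat -> R :=
  fun n => c ^+ n * f n.

Definition sigma (k n : nat) : nat := \sum_(d <- divisors n) d ^ k.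

Definition Eis (R : nzRingType) (beta : R) (k : nat) : nat -> R :=
  fun n => if n == 0%N then 1 else beta * (sigma (2 * k - 1) n)%:R.

Definition E2 (R : nzRingType) : nat -> R := Eis (- 24) 1.
Definition E4 (R : nzRingType) : nat -> R := Eis 240 2.
Definition E6 (R : nzRingType) : nat -> R := Eis (- 504) 3.

From HB Require Import structures.
From mathcomp Require Import all_boot all_order all_algebra.
From mathcomp Require Import ring zify.
Import Order.TTheory GRing.Theory Num.Theory.
Local Open Scope ring_scope.
Set Implicit Arguments. Unset Strict Implicit. Unset Printing Implicit Defensive.

(* The classical convolution identities for the divisor sums
   sigma_1 * sigma_1, sigma_1 * sigma_3, sigma_1 * sigma_5 and
   sigma_3 * sigma_3 are proved by Liouville's elementary method: a sum of
   G(m, n) over all representations N = m x + n y (m, n, x, y >= 1) is split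
   according to x = y, x > y or x < y (nrep_split).  For polynomials g, H
   with H symmetric and g(b, a - b) + g(a - b, b) = H(a, b) this reduces the
   sum of g - H/2 to a telescoping divisor sum plus a diagonal term
   (liouville_identity); explicit polynomial certificates give the four
   identities, which are exactly Ramanujan's equations for (E2, E4, E6).

   Substituting q -> c q preserves the system, so
   b E2(cq), 12 b^2 E4(cq), 8 b^3 E6(cq) solve it for a = 12 b.  Conversely,
   at each order m > 0 the difference of two solutions agreeing below m is
   an eigenvector of the Jacobian J(s) at the constant term for the
   eigenvalue a m.  Comparing with the constant solution at order 1 forces
   s = a/12 and the linear terms; for m >= 2, a m is not an eigenvalue of
   J(a/12), so a solution is determined by its terms of order <= 1, and a
   suitable c matches them. *)

Section DivisorConvolutions.
Variable R : numFieldType.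
Implicit Types (F : nat -> R) (G : nat -> nat -> R).

Lemma sum_nat_vanish F a N K : (N <= K)%N -> (forall x, (N < x)%N -> F x = 0) ->
  \sum_(a <= x < K.+1) F x = \sum_(a <= x < N.+1) F x.
Proof.
move=> NK F0; case: (leqP a N.+1) => aN.
  rewrite (@big_cat_nat _ _ _ N.+1 a K.+1) //= [X in _ + X]big1_seq ?addr0 //.
  by move=> i /andP[_]; rewrite mem_index_iota => /andP[+ _]; apply: F0.
rewrite [RHS]big_geq; last exact: ltnW.
rewrite big1_seq // => i /andP[_]; rewrite mem_index_iota => /andP[ai _].
by apply: F0; apply: ltnW; apply: leq_trans aN ai.
Qed.

Lemma sum_nat_indicator F a b c :
  \sum_(a <= y < b) (c == y)%:R * F y = if (a <= c < b)%N then F c else 0.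
Proof.
rewrite -(@big_nat1_eq R 0 +%R F c a b) big_mkcond /=; apply: eq_bigr => i _.
by rewrite eq_sym; case: eqP => _; rewrite ?mul1r ?mul0r.
Qed.

Lemma sum_nat_shift F N y : (forall x, (N < x)%N -> F x = 0) ->
  \sum_(1 <= Y < N.+1) F (y + Y)%N = \sum_(1 <= x < N.+1) (y < x)%:R * F x.
Proof.
move=> F0.
have -> : \sum_(1 <= Y < N.+1) F (y + Y)%N = \sum_(1 + y <= x < N.+1 + y) F x.
  by rewrite big_addn addnK; apply: eq_bigr => i _; rewrite addnC.
rewrite -(@sum_nat_vanish _ _ N (N + y)) ?leq_addr //; last first.
  by move=> x Nx; rewrite F0 // mulr0.
rewrite [RHS](@big_cat_nat _ _ _ (1 + y)) //=; last by rewrite add1n ltnS leq_addl.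
rewrite [X in _ = X + _]big1_seq ?add0r; last first.
  move=> i /andP[_]; rewrite mem_index_iota ltnS => /andP[_ iy].
  by rewrite ltnNge iy mul0r.
rewrite addSn -addSn addnC; apply: eq_big_nat => i /andP[yi _].
by rewrite yi mul1r.
Qed.

Lemma count_multiples k M N : (0 < k)%N -> (0 < M)%N -> (M <= N)%N ->
  \sum_(1 <= x < N.+1) (k * x == M)%N%:R = (k %| M)%N%:R :> R.
Proof.
move=> k0 M0 MN; case: (boolP (k %| M)%N) => kM; last first.
  by rewrite big1 // => x _; case: eqP => // Ex; case/negP: kM; rewrite -Ex dvdn_mulr.
have -> : \sum_(1 <= x < N.+1) (k * x == M)%N%:R =
          \sum_(1 <= x < N.+1) (M %/ k == x)%N%:R * (1 : R).
  apply: eq_bigr => x _; rewrite mulr1 -{1}(divnK kM) [(M %/ k * k)%N]mulnC.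
  by rewrite eqn_pmul2l // eq_sym.
rewrite sum_nat_indicator divn_gt0 // (dvdn_leq M0 kM) /= ltnS.
by rewrite (leq_trans (leq_div M k) MN).
Qed.

Definition nrep N m n : R :=
  \sum_(1 <= x < N.+1) \sum_(1 <= y < N.+1) (m * x + n * y == N)%N%:R.

Lemma nrep_sym N m n : nrep N m n = nrep N n m.
Proof.
rewrite /nrep exchange_big /=; apply: eq_bigr => x _; apply: eq_bigr => y _.
by rewrite addnC.
Qed.

Lemma nrep_large N A B : (N < A)%N -> nrep N A B = 0.
Proof.
move=> NA; rewrite /nrep big1_seq // => x /andP[_]; rewrite mem_index_iota.
case/andP=> x1 _; rewrite big1 // => y _; case: eqP => // E.
have : (A <= A * x)%N by rewrite leq_pmulr.
lia.
Qed.

(* Liouville's splitting: representations with x = y, x > y and x < y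
   correspond to those of N as (m + n) x, (m + n) x' + m y and
   (m + n) y' + n x respectively. *)
Lemma nrep_split N m n : (0 < N)%N -> (0 < m)%N -> (0 < n)%N ->
  nrep N m n = (m + n %| N)%N%:R + nrep N (m + n) m + nrep N (m + n) n.
Proof.
move=> N0 m0 n0; rewrite /nrep.
have trichotomy x y : (m * x + n * y == N)%N%:R =
   (x == y)%N%:R * (m * x + n * y == N)%N%:R + (y < x)%:R * (m * x + n * y == N)%N%:R
   + (x < y)%:R * (m * x + n * y == N)%N%:R :> R.
  by case: (ltngtP x y) => _; rewrite ?mul0r ?mul1r ?add0r ?addr0.
under eq_bigr do under eq_bigr do rewrite trichotomy.
under eq_bigr do rewrite !big_split /=.
rewrite !big_split /=; congr (_ + _ + _).
- rewrite -(count_multiples (ltn_addr n m0) N0 (leqnn N)).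
  apply: eq_big_nat => x /andP[x1 xN]; rewrite sum_nat_indicator x1 xN.
  by rewrite mulnDl.
- rewrite exchange_big /=; apply: eq_bigr => y _.
  rewrite -sum_nat_shift; last first.
    move=> x Nx; case: eqP; rewrite ?mulr0 // => E.
    have : (x <= m * x)%N by rewrite leq_pmull.
    by rewrite -ltnS; lia.
  by apply: eq_bigr => Y _; congr (_ == _)%:R; rewrite mulnDr mulnDl; lia.
- apply: eq_bigr => x _.
  rewrite -sum_nat_shift; last first.
    move=> y Ny; case: eqP; rewrite ?mulr0 // => E.
    have : (y <= n * y)%N by rewrite leq_pmull.
    lia.
  by apply: eq_bigr => Y _; congr (_ == _)%:R; rewrite mulnDr mulnDl; lia.
Qed.

Lemma nrep_diag N A : (0 < N)%N -> (0 < A)%N ->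
  nrep N A A = (A %| N)%N%:R * ((N %/ A)%N%:R - 1).
Proof.
move=> N0 A0; rewrite /nrep.
have inner x : (1 <= x)%N -> \sum_(1 <= y < N.+1) (A * x + A * y == N)%N%:R
        = ((A * x < N)%N && (A %| N)%N)%:R :> R.
  move=> x1; case: (ltnP (A * x) N) => AxN /=.
    rewrite -(dvdn_subl (ltnW AxN) (dvdn_mulr x (dvdnn A))).
    rewrite -(@count_multiples A (N - A * x) N) ?subn_gt0 ?leq_subr //.
    by apply: eq_bigr => y _; congr (_%:R); apply/eqP/eqP; lia.
  rewrite big1_seq // => y /andP[_]; rewrite mem_index_iota => /andP[y1 _].
  have : (A <= A * y)%N by rewrite leq_pmulr.
  by case: eqP => //; lia.
rewrite (eq_big_nat _ _ (fun x xr => inner x (proj1 (andP xr)))).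
case: (boolP (A %| N)%N) => AN; last first.
  by rewrite mul0r big1 // => x _; rewrite andbF.
rewrite mul1r.
have -> : \sum_(1 <= x < N.+1) ((A * x < N)%N && true)%:R =
          \sum_(1 <= x < N.+1) (x < N %/ A)%N%:R :> R.
  apply: eq_bigr => x _; rewrite andbT; congr (_%:R).
  by rewrite -{1}(divnK AN) [(N %/ A * A)%N]mulnC ltn_pmul2l.
have q1 : (0 < N %/ A)%N by rewrite divn_gt0 // dvdn_leq.
have qN : (N %/ A <= N)%N by rewrite leq_div.
rewrite (@big_cat_nat _ _ _ (N %/ A)) //=; last exact: leqW.
rewrite [X in _ + X]big1_seq ?addr0; last first.
  by move=> x /andP[_]; rewrite mem_index_iota => /andP[qx _]; rewrite ltnNge qx.
rewrite (eq_big_nat _ _ (F2 := fun _ => (1 : R))); last by move=> x /andP[_ ->].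
by rewrite sumr_const_nat natrB.
Qed.

Definition repsum N G : R :=
  \sum_(1 <= m < N.+1) \sum_(1 <= n < N.+1) G m n * nrep N m n.

Definition divpart N G : R :=
  \sum_(1 <= d < N.+1) (d %| N)%N%:R *
    \sum_(1 <= m < N.+1) (m < d)%N%:R * G m (d - m)%N.

Definition lowpart N G : R :=
  \sum_(1 <= A < N.+1) \sum_(1 <= B < N.+1) (B < A)%N%:R * G A B * nrep N A B.

Definition diagpart N G : R := \sum_(1 <= A < N.+1) G A A * nrep N A A.

Lemma repsum_ext N G1 G2 :
  (forall m n, (0 < m)%N -> (0 < n)%N -> G1 m n = G2 m n) ->
  repsum N G1 = repsum N G2.
Proof.
move=> E; apply: eq_big_nat => m /andP[m1 _].
by apply: eq_big_nat => n /andP[n1 _]; rewrite E.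
Qed.

Lemma repsum_lin N (a b : R) G1 G2 :
  repsum N (fun m n => a * G1 m n + b * G2 m n) = a * repsum N G1 + b * repsum N G2.
Proof.
rewrite /repsum !mulr_sumr -big_split /=; apply: eq_bigr => m _.
rewrite !mulr_sumr -big_split /=; apply: eq_bigr => n _.
by rewrite mulrDl !mulrA.
Qed.

Lemma lowpart_ext N G1 G2 :
  (forall A B, (B < A)%N -> G1 A B = G2 A B) -> lowpart N G1 = lowpart N G2.
Proof.
move=> E; apply: eq_bigr => A _; apply: eq_bigr => B _.
by case: ltnP => BA; rewrite ?mul0r // E.
Qed.

(* Summing nrep_split against G: (m, n) with m + n = A, and B = m or n. *)
Lemma repsum_split N G : (0 < N)%N ->
  repsum N G = divpart N G + lowpart N (fun A B => G B (A - B)%N + G (A - B)%N B).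
Proof.
move=> N0; rewrite /repsum.
have -> : \sum_(1 <= m < N.+1) \sum_(1 <= n < N.+1) G m n * nrep N m n =
     \sum_(1 <= m < N.+1) \sum_(1 <= n < N.+1) G m n * (m + n %| N)%N%:R
   + \sum_(1 <= m < N.+1) \sum_(1 <= n < N.+1) G m n * nrep N (m + n) m
   + \sum_(1 <= m < N.+1) \sum_(1 <= n < N.+1) G m n * nrep N (m + n) n.
  rewrite -!big_split /=; apply: eq_big_nat => m /andP[m1 _].
  rewrite -!big_split /=; apply: eq_big_nat => n /andP[n1 _].
  by rewrite nrep_split // !mulrDr.
rewrite -addrA; congr (_ + _).
  have -> : \sum_(1 <= m < N.+1) \sum_(1 <= n < N.+1) G m n * (m + n %| N)%N%:R =
      \sum_(1 <= m < N.+1) \sum_(1 <= d < N.+1)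
        (m < d)%N%:R * ((d %| N)%N%:R * G m (d - m)%N).
    apply: eq_bigr => m _; rewrite -sum_nat_shift; last first.
      move=> d Nd; have /negbTE -> : ~~ (d %| N)%N.
        by apply/negP => /(dvdn_leq N0); rewrite leqNgt Nd.
      by rewrite mul0r.
    by apply: eq_bigr => n _; rewrite addKn mulrC.
  rewrite exchange_big /=; apply: eq_bigr => d _; rewrite mulr_sumr.
  by apply: eq_bigr => m _; rewrite mulrCA.
have -> : \sum_(1 <= m < N.+1) \sum_(1 <= n < N.+1) G m n * nrep N (m + n) m =
    \sum_(1 <= m < N.+1) \sum_(1 <= A < N.+1) (m < A)%N%:R * (G m (A - m)%N * nrep N A m).
  apply: eq_bigr => m _; rewrite -sum_nat_shift; last first.
    by move=> A NA; rewrite nrep_large // mulr0.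
  by apply: eq_bigr => n _; rewrite addKn.
have -> : \sum_(1 <= m < N.+1) \sum_(1 <= n < N.+1) G m n * nrep N (m + n) n =
    \sum_(1 <= n < N.+1) \sum_(1 <= A < N.+1) (n < A)%N%:R * (G (A - n)%N n * nrep N A n).
  rewrite exchange_big /=; apply: eq_bigr => n _; rewrite -sum_nat_shift; last first.
    by move=> A NA; rewrite nrep_large // mulr0.
  by apply: eq_bigr => m _; rewrite addKn addnC.
rewrite (exchange_big _ _ (index_iota 1 N.+1)) /=.
rewrite [X in _ + X](exchange_big _ _ (index_iota 1 N.+1)) /=.
rewrite -big_split /=; apply: eq_bigr => A _; rewrite -big_split /=.
by apply: eq_bigr => B _; rewrite !mulrDr !mulrDl !mulrA.
Qed.

Lemma repsum_sym N H : (forall a b, H a b = H b a) ->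
  repsum N H = 2 * lowpart N H + diagpart N H.
Proof.
move=> Hs; have -> : 2 * lowpart N H = lowpart N H + lowpart N H by ring.
rewrite /repsum /lowpart /diagpart.
have trichotomy A B : H A B * nrep N A B =
   (B < A)%N%:R * H A B * nrep N A B + (A < B)%N%:R * H A B * nrep N A B
   + (A == B)%N%:R * (H A B * nrep N A B).
  by case: (ltngtP A B) => _; rewrite ?mul0r ?mul1r ?add0r ?addr0.
under eq_bigr do under eq_bigr do rewrite trichotomy.
under eq_bigr do rewrite !big_split /=.
rewrite !big_split /=; congr (_ + _ + _).
  rewrite exchange_big /=; apply: eq_bigr => A _; apply: eq_bigr => B _.
  by rewrite Hs nrep_sym.
by apply: eq_big_nat => A /andP[A1 AN]; rewrite sum_nat_indicator A1 AN.
Qed.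

Lemma repsum_reduce N (g H : R -> R -> R) : (0 < N)%N ->
  (forall a b, H a b = H b a) -> (forall a b, g b (a - b) + g (a - b) b = H a b) ->
  repsum N (fun m n => g m%:R n%:R) = divpart N (fun m n => g m%:R n%:R)
    + (repsum N (fun m n => H m%:R n%:R) - diagpart N (fun m n => H m%:R n%:R)) / 2.
Proof.
move=> N0 Hs gH; rewrite repsum_split //.
rewrite (@lowpart_ext _ _ (fun A B => H A%:R B%:R)); last first.
  by move=> A B BA; rewrite natrB ?gH //; exact: ltnW.
rewrite (@repsum_sym N (fun m n => H m%:R n%:R)); last by move=> a b; rewrite Hs.
congr (_ + _); rewrite addrK mulrC mulrA mulVf ?mul1r //.
by rewrite pnatr_eq0.
Qed.

Definition dsum N (f : R -> R) : R := \sum_(1 <= d < N.+1) (d %| N)%N%:R * f d%:R.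

Lemma divpart_telescope N (g T : R -> R -> R) (Q : R -> R) :
  (forall m d, T (m + 1) d - T m d = g m (d - m)) ->
  (forall d, T d d - T 1 d = Q d) ->
  divpart N (fun m n => g m%:R n%:R) = dsum N Q.
Proof.
move=> Et EQ; apply: eq_big_nat => d /andP[d1 dN]; congr (_ * _).
rewrite (@big_cat_nat _ _ _ d) //=; last exact: ltnW.
rewrite [X in _ + X]big1_seq ?addr0; last first.
  move=> m /andP[_]; rewrite mem_index_iota => /andP[dm _].
  by rewrite ltnNge dm mul0r.
rewrite (@eq_big_nat _ _ _ _ _ _ (fun m => T (m.+1)%:R d%:R - T m%:R d%:R)).
  by rewrite telescope_sumr // EQ.
by move=> m /andP[_ md]; rewrite md mul1r natrB ?(ltnW md) // -Et -addn1 natrD.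
Qed.

Definition sigr k N : R := (sigma k N)%:R.

Lemma sigr_dsum k N : (0 < N)%N -> sigr k N = dsum N (fun d => d ^+ k).
Proof.
move=> N0; rewrite /sigr /sigma natr_sum.
have P : perm_eq (divisors N) [seq d <- index_iota 1 N.+1 | (d %| N)%N].
  apply: uniq_perm; first exact: divisors_uniq.
    by rewrite filter_uniq // iota_uniq.
  move=> d; rewrite mem_filter mem_index_iota -dvdn_divisors //.
  case: (boolP (d %| N)%N) => //= dN.
  by rewrite (dvdn_gt0 N0 dN) ltnS dvdn_leq.
rewrite (perm_big _ P) big_filter big_mkcond /=; apply: eq_bigr => d _.
by case: (d %| N)%N; rewrite ?mul1r ?mul0r // natrX.
Qed.

Definition sparse_poly (s : seq (R * nat)) (x : R) : R := \sum_(p <- s) p.1 * x ^+ p.2.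

Lemma dsum_sparse_poly N s : (0 < N)%N ->
  dsum N (sparse_poly s) = \sum_(p <- s) p.1 * sigr p.2 N.
Proof.
move=> N0; under [RHS]eq_bigr do rewrite sigr_dsum // /dsum mulr_sumr.
rewrite exchange_big /=; apply: eq_bigr => d _.
by rewrite /sparse_poly mulr_sumr; apply: eq_bigr => p _; rewrite mulrCA.
Qed.

Lemma diagpart_pow N G c k : (0 < N)%N ->
  (forall A, G A A = c * A%:R ^+ k.+1) ->
  diagpart N G = c * (N%:R * sigr k N - sigr k.+1 N).
Proof.
move=> N0 GA; rewrite !sigr_dsum // /dsum mulr_sumr -sumrB mulr_sumr.
apply: eq_big_nat => A /andP[A1 AN]; rewrite GA nrep_diag //.
case: (boolP (A %| N)%N) => dA; rewrite ?mul0r ?mulr0 ?subrr ?mulr0 //.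
have -> : N%:R = (N %/ A)%N%:R * A%:R :> R by rewrite -natrM divnK.
rewrite !exprS; move: (A%:R ^+ k) => X; ring.
Qed.

Definition conv i j N : R := \sum_(1 <= k < N) sigr i k * sigr j (N - k).

Lemma sigr_count i k N : (0 < k)%N -> (k <= N)%N ->
  sigr i k = \sum_(1 <= m < N.+1) \sum_(1 <= x < N.+1) m%:R ^+ i * (m * x == k)%N%:R.
Proof.
move=> k0 kN; rewrite sigr_dsum //.
have -> : \sum_(1 <= m < N.+1) \sum_(1 <= x < N.+1) m%:R ^+ i * (m * x == k)%N%:R =
          \sum_(1 <= m < N.+1) (m %| k)%N%:R * m%:R ^+ i :> R.
  apply: eq_big_nat => m /andP[m1 _].
  by rewrite -mulr_sumr count_multiples // mulrC.
rewrite [RHS](@sum_nat_vanish _ 1 k N) // => m km.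
have /negbTE -> : ~~ (m %| k)%N by apply/negP => /(dvdn_leq k0); rewrite leqNgt km.
by rewrite mul0r.
Qed.

Lemma indicator_split m n x y N : (0 < m)%N -> (0 < n)%N -> (0 < x)%N -> (0 < y)%N ->
  (m * x + n * y == N)%N%:R =
  \sum_(1 <= k < N) (m * x == k)%N%:R * (n * y == N - k)%N%:R :> R.
Proof.
move=> m0 n0 x0 y0.
have mx0 : (0 < m * x)%N by rewrite muln_gt0 m0.
have ny0 : (0 < n * y)%N by rewrite muln_gt0 n0.
rewrite (@eq_big_nat _ _ _ _ _ _
  (fun k => (m * x == k)%N%:R * (m * x + n * y == N)%N%:R)); last first.
  move=> k /andP[k1 kN]; case: eqP => [<-|]; rewrite ?mul0r ?mul1r //.
  by congr (_%:R); apply/eqP/eqP; lia.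
rewrite (sum_nat_indicator (fun _ => (m * x + n * y == N)%N%:R)).
case: eqP => E; last by case: ifP.
by have -> : (1 <= m * x < N)%N by apply/andP; split; lia.
Qed.

Lemma repsum_monomial i j N : (0 < N)%N ->
  repsum N (fun m n => m%:R ^+ i * n%:R ^+ j) = conv i j N.
Proof.
move=> N0; rewrite /repsum /conv.
have -> : \sum_(1 <= k < N) sigr i k * sigr j (N - k) =
  \sum_(1 <= k < N) \sum_(1 <= m < N.+1) \sum_(1 <= x < N.+1)
    \sum_(1 <= n < N.+1) \sum_(1 <= y < N.+1)
    (m%:R ^+ i * (m * x == k)%N%:R) * (n%:R ^+ j * (n * y == N - k)%N%:R).
  apply: eq_big_nat => k /andP[k1 kN].
  rewrite (sigr_count i k1 (ltnW kN)) (@sigr_count j (N - k) N) ?subn_gt0 ?leq_subr //.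
  rewrite mulr_suml; apply: eq_bigr => m _; rewrite mulr_suml; apply: eq_bigr => x _.
  by rewrite mulr_sumr; apply: eq_bigr => n _; rewrite mulr_sumr.
rewrite [RHS]exchange_big /=; apply: eq_big_nat => m /andP[m1 _].
rewrite [RHS]exchange_big /=.
under [RHS]eq_bigr do rewrite exchange_big /=.
under [RHS]eq_bigr do under eq_bigr do rewrite exchange_big /=.
rewrite [RHS]exchange_big /=; apply: eq_big_nat => n /andP[n1 _].
rewrite /nrep mulr_sumr; apply: eq_big_nat => x /andP[x1 _].
rewrite mulr_sumr; apply: eq_big_nat => y /andP[y1 _].
rewrite (indicator_split N m1 n1 x1 y1) mulr_sumr; apply: eq_bigr => k _.
move: (m%:R ^+ i) (n%:R ^+ j) => X Y; ring.
Qed.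

Lemma liouville_identity N i j (g H T : R -> R -> R) (Q : R -> R) c k :
  (0 < N)%N ->
  (forall a b, H a b = H b a) -> (forall a b, g b (a - b) + g (a - b) b = H a b) ->
  (forall a b, a ^+ i * b ^+ j = g a b - H a b / 2) ->
  (forall a d, T (a + 1) d - T a d = g a (d - a)) ->
  (forall d, T d d - T 1 d = Q d) ->
  (forall d, H d d = c * d ^+ k.+1) ->
  conv i j N = dsum N Q - c * (N%:R * sigr k N - sigr k.+1 N) / 2.
Proof.
move=> N0 Hs gH Em Et EQ HD.
rewrite -repsum_monomial //.
rewrite (@repsum_ext N _ (fun m n => 1 * g m%:R n%:R + (- (1/2)) * H m%:R n%:R)).
  rewrite repsum_lin (repsum_reduce N0 Hs gH) (divpart_telescope N Et EQ).
  by rewrite (@diagpart_pow N _ c k) //; field.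
by move=> m n _ _; rewrite Em mul1r mulNr mulrC mul1r.
Qed.

(* Certificates for Liouville's method: for conv i j one needs g and a
   symmetric H with a^i b^j = g(a, b) - H(a, b)/2 and
   g(b, a - b) + g(a - b, b) = H(a, b), a T telescoping g along the
   segments m + n = d, and the divisor polynomial Q(d) = T(d, d) - T(1, d)
   given by its terms. *)
Definition g_11 (a b : R) : R := 1/2 * b^+2 + 1/2 * a * b + 1/2 * a^+2.
Definition H_11 (a b : R) : R := b^+2 - a * b + a^+2.
Definition T_11 (a b : R) : R :=
  1/12 * a + 1/4 * a * b + 1/2 * a * b^+2 - 1/4 * a^+2 - 1/4 * a^+2 * b + 1/6 * a^+3.
Definition Q_11 : seq (R * nat) := [:: (1/12, 1%N); (-1/2, 2%N); (5/12, 3%N)].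

Lemma conv_1_1 N : (0 < N)%N ->
  conv 1 1 N = (5 * sigr 3 N + (1 - 6 * N%:R) * sigr 1 N) / 12.
Proof.
move=> N0; rewrite (@liouville_identity N 1 1 g_11 H_11 T_11 (sparse_poly Q_11) 1 1) //.
- by rewrite dsum_sparse_poly // !big_cons big_nil /=; field.
all: by move=> *; rewrite /g_11 /H_11 /T_11 /sparse_poly ?big_cons ?big_nil /=; field.
Qed.

Definition g_13 (a b : R) : R :=
  1/8 * b^+4 + 3/4 * a * b^+3 + 3/8 * a^+2 * b^+2 - 1/4 * a^+3 * b + 1/8 * a^+4.
Definition H_13 (a b : R) : R :=
  1/4 * b^+4 - 1/2 * a * b^+3 + 3/4 * a^+2 * b^+2 - 1/2 * a^+3 * b + 1/4 * a^+4.
Definition T_13 (a b : R) : R :=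
  - (1/240) * a - 3/16 * a * b^+2 - 1/8 * a * b^+3 + 1/8 * a * b^+4
  + 3/16 * a^+2 * b + 9/16 * a^+2 * b^+2 + 1/8 * a^+2 * b^+3 + 1/24 * a^+3
  - 3/8 * a^+3 * b - 3/8 * a^+3 * b^+2 - 1/16 * a^+4 + 3/16 * a^+4 * b + 1/40 * a^+5.
Definition Q_13 : seq (R * nat) :=
  [:: (-1/240, 1%N); (1/24, 3%N); (-1/8, 4%N); (7/80, 5%N)].

Lemma conv_1_3 N : (0 < N)%N ->
  conv 1 3 N = (21 * sigr 5 N + (10 - 30 * N%:R) * sigr 3 N - sigr 1 N) / 240.
Proof.
move=> N0; rewrite (@liouville_identity N 1 3 g_13 H_13 T_13 (sparse_poly Q_13) (1/4) 3) //.
- by rewrite dsum_sparse_poly // !big_cons big_nil /=; field.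
all: by move=> *; rewrite /g_13 /H_13 /T_13 /sparse_poly ?big_cons ?big_nil /=; field.
Qed.

Definition g_15 (a b : R) : R :=
  1/12 * b^+6 + 3/4 * a * b^+5 + 5/24 * a^+2 * b^+4 + 5/24 * a^+4 * b^+2
  - 1/4 * a^+5 * b + 1/12 * a^+6.
Definition H_15 (a b : R) : R :=
  1/6 * b^+6 - 1/2 * a * b^+5 + 5/12 * a^+2 * b^+4 + 5/12 * a^+4 * b^+2
  - 1/2 * a^+5 * b + 1/6 * a^+6.
Definition T_15 (a b : R) : R :=
  1/504 * a + 23/144 * a * b^+2 - 55/144 * a * b^+4 - 1/8 * a * b^+5 + 1/12 * a * b^+6
  - 7/48 * a^+2 * b + 5/4 * a^+2 * b^+3 + 55/48 * a^+2 * b^+4 + 1/8 * a^+2 * b^+5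
  - 1/72 * a^+3 - 115/72 * a^+3 * b^+2 - 5/2 * a^+3 * b^+3 - 55/72 * a^+3 * b^+4
  + 35/48 * a^+4 * b + 115/48 * a^+4 * b^+2 + 5/4 * a^+4 * b^+3 + 1/24 * a^+5
  - 7/8 * a^+5 * b - 23/24 * a^+5 * b^+2 - 1/24 * a^+6 + 7/24 * a^+6 * b + 1/84 * a^+7.
Definition Q_15 : seq (R * nat) :=
  [:: (1/504, 1%N); (1/24, 5%N); (-1/12, 6%N); (5/126, 7%N)].

Lemma conv_1_5 N : (0 < N)%N ->
  conv 1 5 N = (20 * sigr 7 N + (21 - 42 * N%:R) * sigr 5 N + sigr 1 N) / 504.
Proof.
move=> N0; rewrite (@liouville_identity N 1 5 g_15 H_15 T_15 (sparse_poly Q_15) (1/6) 5) //.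
- by rewrite dsum_sparse_poly // !big_cons big_nil /=; field.
all: by move=> *; rewrite /g_15 /H_15 /T_15 /sparse_poly ?big_cons ?big_nil /=; field.
Qed.

Definition g_33 (a b : R) : R :=
  1/4 * a^+2 * b^+4 + 1/2 * a^+3 * b^+3 + 1/4 * a^+4 * b^+2.
Definition H_33 (a b : R) : R :=
  1/2 * a^+2 * b^+4 - a^+3 * b^+3 + 1/2 * a^+4 * b^+2.
Definition T_33 (a b : R) : R :=
  - (1/120) * a * b^+2 + 1/24 * a * b^+4 - 1/8 * a^+2 * b^+3 - 1/8 * a^+2 * b^+4
  + 1/12 * a^+3 * b^+2 + 1/4 * a^+3 * b^+3 + 1/12 * a^+3 * b^+4 - 1/8 * a^+4 * b^+2
  - 1/8 * a^+4 * b^+3 + 1/20 * a^+5 * b^+2.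
Definition Q_33 : seq (R * nat) := [:: (-1/120, 3%N); (1/120, 7%N)].

Lemma conv_3_3 N : (0 < N)%N -> conv 3 3 N = (sigr 7 N - sigr 3 N) / 120.
Proof.
move=> N0; rewrite (@liouville_identity N 3 3 g_33 H_33 T_33 (sparse_poly Q_33) 0 5) //.
- by rewrite dsum_sparse_poly // !big_cons big_nil /=; field.
all: by move=> *; rewrite /g_33 /H_33 /T_33 /sparse_poly ?big_cons ?big_nil /=; field.
Qed.

End DivisorConvolutions.

Section RamanujanSystem.
Variable R : numFieldType.
Implicit Types (a b c s : R) (f g : nat -> R).

Lemma eq_by_multiple (x y u v k : R) : x = y -> u - v = k * (x - y) -> u = v.
Proof. by move=> -> E; apply/eqP; rewrite -subr_eq0 E subrr mulr0. Qed.

Lemma eq_by_combination (x1 y1 x2 y2 u v k1 k2 : R) : x1 = y1 -> x2 = y2 ->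
  u - v = k1 * (x1 - y1) + k2 * (x2 - y2) -> u = v.
Proof. by move=> -> -> E; apply/eqP; rewrite -subr_eq0 E !subrr !mulr0 addr0. Qed.

Lemma psmul0 f g : psmul f g 0 = f 0%N * g 0%N.
Proof. by rewrite /psmul big_ord1. Qed.

Lemma psmul_split f g n : (0 < n)%N ->
  psmul f g n = f 0%N * g n + f n * g 0%N + \sum_(1 <= i < n) f i * g (n - i)%N.
Proof.
move=> n0; rewrite /psmul -(big_mkord xpredT (fun i => f i * g (n - i)%N)).
rewrite big_ltn // big_nat_recr //= subn0 subnn; ring.
Qed.

Lemma psmul_diff f g f' g' n : (0 < n)%N ->
  (forall i, (i < n)%N -> f i = f' i) -> (forall i, (i < n)%N -> g i = g' i) ->
  psmul f g n = psmul f' g' n + f 0%N * (g n - g' n) + (f n - f' n) * g 0%N.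
Proof.
move=> n0 fE gE; rewrite !psmul_split // -(fE 0%N) // -(gE 0%N) //.
have -> : \sum_(1 <= i < n) f' i * g' (n - i)%N = \sum_(1 <= i < n) f i * g (n - i)%N.
  apply: eq_big_nat => i /andP[i1 iN].
  by rewrite fE ?gE // ltn_subrL i1 n0.
ring.
Qed.

Lemma Eis_0 beta k : Eis beta k 0 = 1 :> R.
Proof. by []. Qed.

Lemma Eis_1 beta k : Eis beta k 1 = beta :> R.
Proof.
by rewrite /Eis /= /sigma (_ : divisors 1 = [:: 1%N]) // big_seq1 exp1n mulr1.
Qed.

Lemma psmul_Eis (b1 b2 : R) k1 k2 n : (0 < n)%N ->
  psmul (Eis b1 k1) (Eis b2 k2) n =
  b2 * sigr R (2 * k2 - 1) n + b1 * sigr R (2 * k1 - 1) n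
  + b1 * b2 * conv R (2 * k1 - 1) (2 * k2 - 1) n.
Proof.
move=> n0; rewrite psmul_split // /Eis /= (gtn_eqF n0) mul1r mulr1 /conv mulr_sumr.
congr (_ + _); apply: eq_big_nat => i /andP[i1 iN].
have i0 : (0 < n - i)%N by rewrite subn_gt0.
by rewrite (gtn_eqF i1) (gtn_eqF i0) /sigr; ring.
Qed.

(* Ramanujan's identities  q E2' = (E2^2 - E4)/12,  q E4' = (E2 E4 - E6)/3,
   q E6' = (E2 E6 - E4^2)/2,  coefficientwise. *)
Lemma ramanujan_E2 n : 12 * n%:R * E2 R n = psmul (E2 R) (E2 R) n - E4 R n.
Proof.
case: (posnP n) => [->|n0]; first by rewrite psmul0 mulr0 mul0r mulr1 subrr.
rewrite psmul_Eis // conv_1_1 // /E2 /E4 /Eis (gtn_eqF n0) /sigr; by field.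
Qed.

Lemma ramanujan_E4 n : 3 * n%:R * E4 R n = psmul (E2 R) (E4 R) n - E6 R n.
Proof.
case: (posnP n) => [->|n0]; first by rewrite psmul0 mulr0 mul0r mulr1 subrr.
rewrite psmul_Eis // conv_1_3 // /E2 /E4 /E6 /Eis (gtn_eqF n0) /sigr; by field.
Qed.

Lemma ramanujan_E6 n :
  2 * n%:R * E6 R n = psmul (E2 R) (E6 R) n - psmul (E4 R) (E4 R) n.
Proof.
case: (posnP n) => [->|n0]; first by rewrite !psmul0 mulr0 mul0r !mulr1 subrr.
rewrite !psmul_Eis // conv_1_5 // conv_3_3 // /E2 /E4 /E6 /Eis (gtn_eqF n0) /sigr /=.
by field.
Qed.

Definition ramanujan_system a (t1 t2 t3 : nat -> R) : Prop :=
  forall n, [/\ psder a t1 n = psmul t1 t1 n - t2 n / 12,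
                psder a t2 n = 4 * psmul t1 t2 n - 6 * t3 n &
                psder a t3 n = 6 * psmul t1 t3 n - psmul t2 t2 n / 3].

Lemma psmul_resc (p p' c : R) (f g u v : nat -> R) n :
  (forall k, u k = p * psresc c f k) -> (forall k, v k = p' * psresc c g k) ->
  psmul u v n = p * p' * (c ^+ n * psmul f g n).
Proof.
move=> hu hv; rewrite /psmul !mulr_sumr; apply: eq_bigr => i _.
rewrite hu hv /psresc.
have -> : c ^+ n = c ^+ i * c ^+ (n - i)%N by rewrite -exprD subnKC // -ltnS.
move: (c ^+ i) (c ^+ (n - i)%N) => X Y; ring.
Qed.

Lemma eisenstein_solution a b c (u1 u2 u3 : nat -> R) : 12 * b = a ->
  (forall n, u1 n = b * psresc c (E2 R) n) ->
  (forall n, u2 n = 12 * b ^+ 2 * psresc c (E4 R) n) ->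
  (forall n, u3 n = 8 * b ^+ 3 * psresc c (E6 R) n) ->
  ramanujan_system a u1 u2 u3.
Proof.
move=> ab h1 h2 h3 n.
rewrite (psmul_resc n h1 h1) (psmul_resc n h1 h2) (psmul_resc n h1 h3).
rewrite (psmul_resc n h2 h2) /psder h1 h2 h3 /psresc -ab.
have r2 := ramanujan_E2 n; have r4 := ramanujan_E4 n; have r6 := ramanujan_E6 n.
split.
- by apply: (eq_by_multiple (k := b ^+ 2 * c ^+ n) r2); field.
- by apply: (eq_by_multiple (k := 48 * b ^+ 3 * c ^+ n) r4); field.
- by apply: (eq_by_multiple (k := 48 * b ^+ 4 * c ^+ n) r6); field.
Qed.

Lemma constant_terms a (t1 t2 t3 : nat -> R) : ramanujan_system a t1 t2 t3 ->
  t2 0%N = 12 * t1 0%N ^+ 2 /\ t3 0%N = 8 * t1 0%N ^+ 3.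
Proof.
move=> ts; have [e1 e2 _] := ts 0%N.
rewrite /psder !psmul0 mulr0n mulr0 mul0r in e1 e2.
have t20 : t2 0%N = 12 * t1 0%N ^+ 2.
  by apply: (eq_by_multiple (k := 12) e1); field.
split=> //; rewrite t20 in e2.
by apply: (eq_by_multiple (k := 1/6) e2); field.
Qed.

Definition const_series s : nat -> R := fun n => if n == 0%N then s else 0.

Lemma psmul_const s s' n :
  psmul (const_series s) (const_series s') n = const_series (s * s') n.
Proof.
rewrite /psmul big_ord_recl /= subn0 big1 ?addr0 => [|i _]; last by rewrite mul0r.
by rewrite /const_series; case: (n == 0%N); rewrite ?mulr0.
Qed.

Lemma const_solution a s : ramanujan_system a
  (const_series s) (const_series (12 * s ^+ 2)) (const_series (8 * s ^+ 3)).
Proof.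
move=> n; rewrite /psder !psmul_const /const_series.
by case: eqP => [->|_]; split; rewrite ?mulr0 ?mul0r ?subrr //; field.
Qed.

(* Linearisation at a constant term s: the solutions of l v = J(s) v, where
   J(s) is the Jacobian of the system at (s, 12 s^2, 8 s^3). *)
Lemma linearized_system s l x y z :
  l * x = 2 * s * x - y / 12 ->
  l * y = 4 * s * y + 48 * s ^+ 2 * x - 6 * z ->
  l * z = 6 * s * z + 48 * s ^+ 3 * x - 8 * s ^+ 2 * y ->
  [/\ y = 12 * (2 * s - l) * x, z = (2 * (4 * s - l) * (2 * s - l) + 8 * s ^+ 2) * x
    & 2 * l ^+ 2 * (l - 12 * s) * x = 0].
Proof.
move=> E1 E2 E3.
have hy : y = 12 * (2 * s - l) * x.
  by apply: (eq_by_multiple (k := 12) E1); field.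
have hz : z = (2 * (4 * s - l) * (2 * s - l) + 8 * s ^+ 2) * x.
  by rewrite hy in E2; apply: (eq_by_multiple (k := 1/6) E2); field.
split=> //; rewrite hy hz in E3.
by apply: (eq_by_multiple (k := 1) E3); field.
Qed.

(* Two solutions agreeing below order m > 0 differ at order m by an
   eigenvector of J(s) for the eigenvalue a m. *)
Lemma solution_difference a (t1 t2 t3 u1 u2 u3 : nat -> R) m :
  ramanujan_system a t1 t2 t3 -> ramanujan_system a u1 u2 u3 -> (0 < m)%N ->
  (forall i, (i < m)%N -> [/\ t1 i = u1 i, t2 i = u2 i & t3 i = u3 i]) ->
  let s := t1 0%N in let l := a * m%:R in
  [/\ t2 m - u2 m = 12 * (2 * s - l) * (t1 m - u1 m),
      t3 m - u3 m = (2 * (4 * s - l) * (2 * s - l) + 8 * s ^+ 2) * (t1 m - u1 m)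
    & 2 * l ^+ 2 * (l - 12 * s) * (t1 m - u1 m) = 0].
Proof.
move=> ts us m0 agree s l; have [t20 t30] := constant_terms ts.
have a1 i : (i < m)%N -> t1 i = u1 i by case/agree.
have a2 i : (i < m)%N -> t2 i = u2 i by case/agree.
have a3 i : (i < m)%N -> t3 i = u3 i by case/agree.
have [et1 et2 et3] := ts m; have [eu1 eu2 eu3] := us m.
rewrite (psmul_diff m0 a1 a1) in et1.
rewrite (psmul_diff m0 a1 a2) t20 in et2.
rewrite (psmul_diff m0 a1 a3) (psmul_diff m0 a2 a2) in et3.
rewrite t20 t30 in et3; rewrite /psder in et1 et2 et3 eu1 eu2 eu3.
apply: linearized_system.
- by apply: (eq_by_combination (k1 := 1) (k2 := -1) et1 eu1); rewrite /s /l; field.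
- by apply: (eq_by_combination (k1 := 1) (k2 := -1) et2 eu2); rewrite /s /l; field.
- by apply: (eq_by_combination (k1 := 1) (k2 := -1) et3 eu3); rewrite /s /l; field.
Qed.

(* Comparing with the constant solution at order 1: a solution with nonzero
   linear terms has constant term a/12 and linear terms proportional to
   (1, -10 a, 7 a^2 / 6). *)
Lemma linear_terms a (t1 t2 t3 : nat -> R) : a != 0 -> ramanujan_system a t1 t2 t3 ->
  (t1 1%N, t2 1%N, t3 1%N) != (0, 0, 0) ->
  [/\ t1 0%N = a / 12, t1 1%N != 0, t2 1%N = - 10 * a * t1 1%N
    & t3 1%N = 7 / 6 * a ^+ 2 * t1 1%N].
Proof.
move=> a0 ts nz; have [t20 t30] := constant_terms ts.
have agree0 i : (i < 1)%N -> [/\ t1 i = const_series (t1 0%N) i,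
    t2 i = const_series (12 * t1 0%N ^+ 2) i & t3 i = const_series (8 * t1 0%N ^+ 3) i].
  by case: i => // _; rewrite /const_series /= t20 t30.
have /= := solution_difference ts (const_solution a (t1 0%N)) (ltn0Sn 0) agree0.
rewrite /const_series /= !subr0 mulr1 => -[y1 z1 deg].
have x1 : t1 1%N != 0 by apply: contraNneq nz => x1; rewrite y1 z1 x1 !mulr0.
have s0 : t1 0%N = a / 12.
  move/eqP: deg; rewrite !mulf_eq0 (negbTE x1) (negbTE a0) pnatr_eq0 orbF /=.
  by rewrite subr_eq0 => /eqP ->; field.
by split=> //; [rewrite y1 s0 | rewrite z1 s0]; field.
Qed.

(* A solution with constant term a/12 is determined by its coefficients of
   order <= 1: at order m >= 2 the eigenvalue a m of J(a/12) is excluded. *)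
Lemma solution_unique a (t1 t2 t3 u1 u2 u3 : nat -> R) : a != 0 ->
  ramanujan_system a t1 t2 t3 -> ramanujan_system a u1 u2 u3 -> t1 0%N = a / 12 ->
  (forall n, (n <= 1)%N -> [/\ t1 n = u1 n, t2 n = u2 n & t3 n = u3 n]) ->
  forall n, [/\ t1 n = u1 n, t2 n = u2 n & t3 n = u3 n].
Proof.
move=> a0 ts us s0 agree01; elim/ltn_ind => n IH.
case: (leqP n 1) => [|n2]; first exact: agree01.
have /= [y1 z1 deg] := solution_difference ts us (ltnW n2) IH.
have n0 : (n != 0)%N by rewrite -lt0n ltnW.
have n1 : n%:R - 1 != 0 :> R by rewrite subr_eq0 pnatr_eq1 gtn_eqF.
have ev : 2 * (a * n%:R) ^+ 2 * (a * n%:R - 12 * t1 0%N) != 0.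
  have -> : a * n%:R - 12 * t1 0%N = a * (n%:R - 1) by rewrite s0; field.
  by rewrite !mulf_neq0 ?expf_neq0 ?pnatr_eq0.
have x1 : t1 n - u1 n = 0 by move/eqP: deg; rewrite mulf_eq0 (negbTE ev) => /eqP.
rewrite x1 in y1 z1.
by split; apply/eqP; rewrite -subr_eq0 ?x1 ?y1 ?z1 ?mulr0.
Qed.

End RamanujanSystem.

Unset Implicit Arguments.

Theorem mainTheorem7 (C : numClosedFieldType) (a : C) (t1 t2 t3 : nat -> C) :
  a != 0 ->
  (forall n, psder a t1 n = psmul t1 t1 n - t2 n / 12) ->
  (forall n, psder a t2 n = 4 * psmul t1 t2 n - 6 * t3 n) ->
  (forall n, psder a t3 n = 6 * psmul t1 t3 n - psmul t2 t2 n / 3) ->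
  (t1 1%N, t2 1%N, t3 1%N) != (0, 0, 0) ->
  let b := a / 12 in
  (t1 0%N, t2 0%N, t3 0%N) = (b, 12 * b ^+ 2, 8 * b ^+ 3) /\
  exists2 c : C, c != 0 &
    forall n, [/\ t1 n = b * psresc c (@E2 C) n,
                  t2 n = 12 * b ^+ 2 * psresc c (@E4 C) n &
                  t3 n = 8 * b ^+ 3 * psresc c (@E6 C) n].
Proof.
move=> a0 h1 h2 h3 nz b.
have ts : ramanujan_system a t1 t2 t3 by move=> n; split.
have [t20 t30] := constant_terms ts.
have [s0 x0 y1 z1] := linear_terms a0 ts nz.
have b0 : b != 0 by rewrite mulf_neq0 ?invr_eq0 ?pnatr_eq0.
split; first by rewrite t20 t30 s0.
(* Match the linear coefficient of t1 with that of b E2(c q) = b - 24 b c q + ... *)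
pose c := - t1 1%N / (24 * b).
exists c; first by rewrite mulf_neq0 ?oppr_eq0 // invr_eq0 mulf_neq0 // pnatr_eq0.
have ab : 12 * b = a by rewrite /b; field.
have us := @eisenstein_solution _ a b c _ _ _ ab
  (fun _ => erefl) (fun _ => erefl) (fun _ => erefl).
apply: (solution_unique a0 ts us s0) => -[|[|//]] _.
  by rewrite /psresc /E2 /E4 /E6 !Eis_0 t20 t30 s0 !mulr1.
rewrite /psresc /E2 /E4 /E6 !Eis_1 y1 z1 /c /b; by split; field.
Qed.
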